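(* Let $S$ be a partial semigroup and let $\mathcal{S}_0,\mathcal{S}_1$ be function arrays over $S$ indexed by finite sets $\Lambda_0,\Lambda_1$ respectively. Then there is a homomorphism of function arrays $\gamma\mathcal{S}_0\otimes\gamma\mathcal{S}_1\to\gamma(\mathcal{S}_0\otimes\mathcal{S}_1)$.
   Context: Partial semigroup: partial operation with $(rs)t$ defined iff $r(st)$ defined, and then equal. A function array over $S$ indexed by non-empty $\Lambda$ and based on a set $X$ assigns to each $\lambda\in\Lambda$ a partial function $\lambda$ from $X$ to $S$ such that for all $s_0,\dots,s_k\in S$ there is $x\in X$ with all $s_i\lambda(x)$ defined. Total: $S$ a semigroup and all $\lambda$ defined everywhere. For $\mathcal{S}$ based on $X$: $\gamma S$ = ultrafilters $\mathcal{U}$ on $S$ with $\{t: st\text{ defined}\}\in\mathcal{U}$ for all $s$, with $B\in\mathcal{U}*\mathcal{V}$ iff $\{s:\{t: st\text{ defined},\ st\in B\}\in\mathcal{V}\}\in\mathcal{U}$ (a semigroup); $\gamma X$ = ultrafilters $\mathcal{U}$ on $X$ with $\{x: s\lambda(x)\text{ defined}\}\in\mathcal{U}$ for all $s,\lambda$; $\lambda$ extends to $\gamma X\to\gamma S$ by $B\in\lambda(\mathcal{U})$ iff $\lambda^{-1}(B)\in\mathcal{U}$; $\gamma\mathcal{S}$ is the total function array over $\gamma S$ indexed by $\Lambda$ based on $\gamma X$. Tensor product: for finite $\Lambda_0,\Lambda_1$ let $\Lambda_0\star\Lambda_1=\Lambda_0\sqcup\Lambda_1\sqcup(\Lambda_0\times\Lambda_1)$;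 for function arrays $\mathcal{S}_i$ over the same partial semigroup $S$ indexed by $\Lambda_i$ and based on $X_i$, $\mathcal{S}_0\otimes\mathcal{S}_1$ is the function array over $S$ indexed by $\Lambda_0\star\Lambda_1$ and based on $X_0\times X_1$ given by $\lambda_0(x_0,x_1)=\lambda_0(x_0)$, $\lambda_1(x_0,x_1)=\lambda_1(x_1)$, $(\lambda_0,\lambda_1)(x_0,x_1)=\lambda_0(x_0)\lambda_1(x_1)$ (defined when this product is). A homomorphism between total function arrays $\mathcal{A}$ (over $A$, based on $X$) and $\mathcal{B}$ (over $B$, based on $Y$) indexed by the same set is a pair $(f,g)$, $f\colon X\to Y$, $g\colon A\to B$ a semigroup homomorphism, with $\lambda(f(x))=g(\lambda(x))$ for all $x,\lambda$. *)

From Stdlib Require Import List FinFun.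
Set Implicit Arguments.
Unset Strict Implicit.

Record psemigroup := PSemigroup {
  ps_car :> Type;
  ps_mul : ps_car -> ps_car -> option ps_car;
  ps_assoc : forall r s t : ps_car,
    match ps_mul r s with Some rs => ps_mul rs t | None => None end =
    match ps_mul s t with Some st => ps_mul r st | None => None end }.

Record function_array (S : psemigroup) (L X : Type) := FunctionArray {
  fa_map : L -> X -> option S;
  fa_index_nonempty : inhabited L;
  fa_cond : forall (s0 : S) (ss : list S), exists x : X,
    forall (l : L) (s : S), In s (s0 :: ss) ->
      exists y, fa_map l x = Some y /\ ps_mul s y <> None }.

Definition is_ultrafilter (T : Type) (U : (T -> Prop) -> Prop) : Prop :=
  U (fun _ => True) /\ ~ U (fun _ => False) /\
  (forall A B : T -> Prop, U A -> (forall x, A x -> B x) -> U B) /\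
  (forall A B : T -> Prop, U A -> U B -> U (fun x => A x /\ B x)) /\
  (forall A : T -> Prop, U A \/ U (fun x => ~ A x)).

Definition gammaS (S : psemigroup) (U : (S -> Prop) -> Prop) : Prop :=
  is_ultrafilter U /\ forall s : S, U (fun t => ps_mul s t <> None).

Definition gamma_mul (S : psemigroup) (U V : (S -> Prop) -> Prop)
  : (S -> Prop) -> Prop :=
  fun B => U (fun s => V (fun t => exists st, ps_mul s t = Some st /\ B st)).

Definition gammaX (S : psemigroup) (L X : Type) (m : L -> X -> option S)
  (U : (X -> Prop) -> Prop) : Prop :=
  is_ultrafilter U /\
  forall (s : S) (l : L),
    U (fun x => exists y, m l x = Some y /\ ps_mul s y <> None).

Definition gamma_map (S : psemigroup) (L X : Type) (m : L -> X -> option S)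
  (l : L) (U : (X -> Prop) -> Prop) : (S -> Prop) -> Prop :=
  fun B => U (fun x => exists y, m l x = Some y /\ B y).

Definition star (L0 L1 : Type) : Type := ((L0 + L1) + (L0 * L1))%type.

Definition tensor_map (S : psemigroup) (L0 L1 X0 X1 : Type)
  (m0 : L0 -> X0 -> option S) (m1 : L1 -> X1 -> option S)
  : star L0 L1 -> X0 * X1 -> option S :=
  fun l x =>
    match l with
    | inl (inl l0) => m0 l0 (fst x)
    | inl (inr l1) => m1 l1 (snd x)
    | inr (l0, l1) =>
        match m0 l0 (fst x), m1 l1 (snd x) with
        | Some a, Some b => ps_mul a b
        | _, _ => None
        end
    end.

Definition tensor_function_array (S : psemigroup) (L0 L1 X0 X1 : Type)
  (S0 : function_array S L0 X0) (S1 : function_array S L1 X1)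
  : star L0 L1 -> X0 * X1 -> option S :=
  tensor_map (fa_map S0) (fa_map S1).

Definition total_tensor_map (A : Type) (mul : A -> A -> A) (L0 L1 X0 X1 : Type)
  (m0 : L0 -> X0 -> A) (m1 : L1 -> X1 -> A) : star L0 L1 -> X0 * X1 -> A :=
  fun l x =>
    match l with
    | inl (inl l0) => m0 l0 (fst x)
    | inl (inr l1) => m1 l1 (snd x)
    | inr (l0, l1) => mul (m0 l0 (fst x)) (m1 l1 (snd x))
    end.

(** Homomorphism (f, g) between total function arrays indexed by the same L.
    Carriers and bases are given as subsets (inA, inXA) of ambient types. *)
Definition is_fa_hom (L XA XB A B : Type)
  (inXA : XA -> Prop) (inA : A -> Prop) (mulA : A -> A -> A) (mapA : L -> XA -> A)
  (inXB : XB -> Prop) (inB : B -> Prop) (mulB : B -> B -> B) (mapB : L -> XB -> B)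
  (f : XA -> XB) (g : A -> B) : Prop :=
  (forall x, inXA x -> inXB (f x)) /\
  (forall a, inA a -> inB (g a)) /\
  (forall a b, inA a -> inA b -> g (mulA a b) = mulB (g a) (g b)) /\
  (forall (l : L) x, inXA x -> mapB l (f x) = g (mapA l x)).

Definition gamma_tensor_hom (S : psemigroup) (L0 L1 X0 X1 : Type)
  (S0 : function_array S L0 X0) (S1 : function_array S L1 X1)
  (f : ((X0 -> Prop) -> Prop) * ((X1 -> Prop) -> Prop) -> ((X0 * X1 -> Prop) -> Prop))
  (g : ((S -> Prop) -> Prop) -> ((S -> Prop) -> Prop)) : Prop :=
  is_fa_hom
    (* gamma S0 (x) gamma S1: over gamma S, based on gamma X0 x gamma X1 *)
    (fun x => gammaX (fa_map S0) (fst x) /\ gammaX (fa_map S1) (snd x))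
    (@gammaS S) (@gamma_mul S)
    (total_tensor_map (@gamma_mul S) (gamma_map (fa_map S0)) (gamma_map (fa_map S1)))
    (* gamma (S0 (x) S1): over gamma S, based on gamma (X0 x X1) *)
    (gammaX (tensor_function_array S0 S1))
    (@gammaS S) (@gamma_mul S)
    (gamma_map (tensor_function_array S0 S1))
    f g.

From Stdlib Require Import List FinFun.
From Stdlib Require Import FunctionalExtensionality PropExtensionality Classical.

(* The homomorphism is (f, id) with f (U0, U1) the Fubini product U0 ⊗ U1,
   where B ∈ U0 ⊗ U1 iff {x0 | {x1 | (x0, x1) ∈ B} ∈ U1} ∈ U0.  Sets depending
   on one coordinate only are measured by that coordinate's ultrafilter, which
   handles the indices of Λ0 and Λ1.  For a pair (λ0, λ1) the image of U0 ⊗ U1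
   under x ↦ λ0(x0) λ1(x1) is, unfolding both definitions, exactly
   λ0(U0) * λ1(U1); and associativity of S shows that U0 ⊗ U1 lies in γ(X0 × X1). *)

Section Ultrafilter.

Context {T : Type} {U : (T -> Prop) -> Prop} (U_uf : is_ultrafilter U).

Lemma ultrafilter_mono {A B : T -> Prop} :
  U A -> (forall x, A x -> B x) -> U B.
Proof. destruct U_uf as (_ & _ & Hmono & _); exact (Hmono A B). Qed.

Lemma ultrafilter_ext (A B : T -> Prop) :
  (forall x, A x <-> B x) -> (U A <-> U B).
Proof. intros HAB; split; intros H; apply (ultrafilter_mono H); apply HAB. Qed.

Lemma ultrafilter_const (P : Prop) : U (fun _ => P) <-> P.
Proof.
  destruct U_uf as (Htrue & Hfalse & _).
  split; intros H.
  - apply NNPP; intros HnP; apply Hfalse.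
    apply (ultrafilter_mono H); intros _ HP; contradiction.
  - apply (ultrafilter_mono Htrue); auto.
Qed.

End Ultrafilter.

Definition ultrafilter_prod {X0 X1 : Type}
  (U0 : (X0 -> Prop) -> Prop) (U1 : (X1 -> Prop) -> Prop) : (X0 * X1 -> Prop) -> Prop :=
  fun B => U0 (fun x0 => U1 (fun x1 => B (x0, x1))).

Section UltrafilterProd.

Context {X0 X1 : Type} {U0 : (X0 -> Prop) -> Prop} {U1 : (X1 -> Prop) -> Prop}.
Context (U0_uf : is_ultrafilter U0) (U1_uf : is_ultrafilter U1).

Lemma is_ultrafilter_prod : is_ultrafilter (ultrafilter_prod U0 U1).
Proof.
  pose proof U0_uf as (T0 & F0 & Mono0 & Meet0 & Dich0).
  pose proof U1_uf as (T1 & F1 & Mono1 & Meet1 & Dich1).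
  unfold ultrafilter_prod; split; [|split; [|split; [|split]]].
  - apply (Mono0 _ _ T0); auto.
  - intros H; apply F0, (Mono0 _ _ H); intros x0 Hx0; exact (F1 Hx0).
  - intros A B HA HAB; apply (Mono0 _ _ HA); intros x0 Hx0.
    apply (Mono1 _ _ Hx0); auto.
  - intros A B HA HB; apply (Mono0 _ _ (Meet0 _ _ HA HB)); intros x0 [Ha Hb].
    exact (Meet1 _ _ Ha Hb).
  - intros A; destruct (Dich0 (fun x0 => U1 (fun x1 => A (x0, x1)))) as [H|H];
      [left; exact H | right].
    apply (Mono0 _ _ H); intros x0 Hx0.
    destruct (Dich1 (fun x1 => A (x0, x1))); tauto.
Qed.

Lemma ultrafilter_prod_fst (A : X0 -> Prop) :
  ultrafilter_prod U0 U1 (fun x => A (fst x)) <-> U0 A.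
Proof.
  apply (ultrafilter_ext U0_uf); intros x0; exact (ultrafilter_const U1_uf (A x0)).
Qed.

Lemma ultrafilter_prod_snd (B : X1 -> Prop) :
  ultrafilter_prod U0 U1 (fun x => B (snd x)) <-> U1 B.
Proof. exact (ultrafilter_const U0_uf (U1 B)). Qed.

End UltrafilterProd.

Lemma ps_mul_defined_assoc {S : psemigroup} {s a sa b : S} :
  ps_mul s a = Some sa -> ps_mul sa b <> None ->
  exists ab, ps_mul a b = Some ab /\ ps_mul s ab <> None.
Proof.
  intros Hsa Hsab; pose proof (ps_assoc s a b) as Hassoc; rewrite Hsa in Hassoc.
  destruct (ps_mul a b) as [ab|]; [|congruence].
  exists ab; split; [reflexivity | congruence].
Qed.

Section TensorProd.

Context {S : psemigroup} {L0 L1 X0 X1 : Type}.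
Context (m0 : L0 -> X0 -> option S) (m1 : L1 -> X1 -> option S).

Lemma gammaX_tensor_prod {U0 U1} :
  gammaX m0 U0 -> gammaX m1 U1 -> gammaX (tensor_map m0 m1) (ultrafilter_prod U0 U1).
Proof.
  intros [U0_uf G0] [U1_uf G1]; split; [exact (is_ultrafilter_prod U0_uf U1_uf) |].
  intros s [[l0|l1]|[l0 l1]]; unfold tensor_map.
  - exact (proj2 (ultrafilter_prod_fst U0_uf U1_uf _) (G0 s l0)).
  - exact (proj2 (ultrafilter_prod_snd U0_uf _) (G1 s l1)).
  - apply (ultrafilter_mono U0_uf (G0 s l0)); intros x0 [a [Ha Hsa]]; cbn.
    destruct (ps_mul s a) as [sa|] eqn:Esa; [|congruence].
    apply (ultrafilter_mono U1_uf (G1 sa l1)); intros x1 [b [Hb Hsab]].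
    rewrite Ha, Hb; exact (ps_mul_defined_assoc Esa Hsab).
Qed.

Lemma gamma_map_pair_fiber {U1 : (X1 -> Prop) -> Prop} (U1_uf : is_ultrafilter U1)
  (o : option S) (n1 : X1 -> option S) (B : S -> Prop) :
  U1 (fun x1 => exists y,
        match o, n1 x1 with Some a, Some b => ps_mul a b | _, _ => None end = Some y
        /\ B y)
  <-> exists s, o = Some s /\
        U1 (fun x1 => exists t, n1 x1 = Some t /\ exists st, ps_mul s t = Some st /\ B st).
Proof.
  destruct o as [a|].
  - rewrite (ultrafilter_ext U1_uf _
      (fun x1 => exists t, n1 x1 = Some t /\ exists st, ps_mul a t = Some st /\ B st)).
    + split; [eauto | intros [s [Hs H]]; injection Hs as <-; exact H].
    + intros x1; destruct (n1 x1) as [b|]; firstorder congruence.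
  - rewrite (ultrafilter_ext U1_uf _ (fun _ => False)), ultrafilter_const
      by firstorder congruence.
    firstorder congruence.
Qed.

Lemma gamma_map_tensor_prod {U0 U1} (U0_uf : is_ultrafilter U0) (U1_uf : is_ultrafilter U1)
  (l : star L0 L1) :
  gamma_map (tensor_map m0 m1) l (ultrafilter_prod U0 U1)
  = total_tensor_map (@gamma_mul S) (gamma_map m0) (gamma_map m1) l (U0, U1).
Proof.
  apply functional_extensionality; intros B.
  apply propositional_extensionality.
  destruct l as [[l0|l1]|[l0 l1]]; unfold gamma_map, tensor_map, total_tensor_map; cbn.
  - exact (ultrafilter_prod_fst U0_uf U1_uf _).
  - exact (ultrafilter_prod_snd U0_uf _).
  - apply (ultrafilter_ext U0_uf); intros x0.
    exact (gamma_map_pair_fiber U1_uf (m0 l0 x0) (m1 l1) B).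
Qed.

End TensorProd.

Theorem proposition3p2 (S : psemigroup) (L0 L1 X0 X1 : Type)
  (S0 : function_array S L0 X0) (S1 : function_array S L1 X1) :
  Finite L0 -> Finite L1 ->
  exists f g, gamma_tensor_hom S0 S1 f g.
Proof.
  intros _ _.
  exists (fun U => ultrafilter_prod (fst U) (snd U)), (fun a => a).
  split; [|split; [|split]].
  - intros [U0 U1] [G0 G1]; exact (gammaX_tensor_prod _ _ G0 G1).
  - auto.
  - reflexivity.
  - intros l [U0 U1] [[U0_uf _] [U1_uf _]].
    exact (gamma_map_tensor_prod _ _ U0_uf U1_uf l).
Qed.
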